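(* Let $b\ge0$, $c\ge0$, $1\le a\le c+1$, and $f\in\mathbb{F}_q[x_1,\dots,x_c]$. If $\delta_{a;b}(f)$ is a polynomial, then $\delta_{a';b}(f)$ is a polynomial for every integer $1\le a'<a$.
   Context: $q$ is a power of a prime. Delta operators: for integers $b\ge0$, $c\ge0$, $1\le a\le c+1$, $\delta_{a;b}:\mathbb{F}_q(x_1,\dots,x_c)\to\mathbb{F}_q(x_1,\dots,x_{c+1})$ sends $f$ to $N/L(x_1,\dots,x_a)$, where $N$ is the $a\times a$ determinant whose $t$-th row is $(x_1^{q^{t-1}},\dots,x_a^{q^{t-1}})$ for $t=1,\dots,a-1$ and whose last row is $(x_1^{q^b}f(\hat x_1),\dots,x_a^{q^b}f(\hat x_a))$, with $f(\hat x_i)=f(x_1,\dots,x_{i-1},x_{i+1},\dots,x_{c+1})$, and $L(x_1,\dots,x_a)=\det(x_j^{q^{t-1}})_{1\le t,j\le a}$. *)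

From HB Require Import structures.
From mathcomp Require Import all_boot all_order all_algebra all_field.
From mathcomp Require Import mpoly.
Set Implicit Arguments. Unset Strict Implicit. Unset Printing Implicit Defensive.
Import GRing.Theory.
Local Open Scope ring_scope.

(* F_q is modelled as an arbitrary finite field F; q := #|F|. *)
Definition qF (F : finFieldType) : nat := #|F|.

(* f(\hat x_i) : substitute x_1..x_c by x_1..x_{i-1},x_{i+1},..,x_{c+1}
   (0-indexed: variable j goes to variable lift i j). *)
Definition fhat (F : finFieldType) (c : nat) (i : 'I_c.+1) (f : {mpoly F[c]})
  : {mpoly F[c.+1]} := f \mPo [tuple 'X_(lift i j) | j < c].

(* Column j (0-indexed, j < a <= c+1) uses variable x_{j+1}. *)
Definition var_of (c a : nat) (j : 'I_a) : 'I_c.+1 := inord j.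

Definition Nmx (F : finFieldType) (c a b : nat) (f : {mpoly F[c]})
  : 'M[{mpoly F[c.+1]}]_a :=
  \matrix_(t < a, j < a)
    if (t.+1 < a)%N then 'X_(var_of c j) ^+ (qF F ^ t)%N
    else 'X_(var_of c j) ^+ (qF F ^ b)%N * fhat (var_of c j) f.

Definition Lmx (F : finFieldType) (c a : nat) : 'M[{mpoly F[c.+1]}]_a :=
  \matrix_(t < a, j < a) 'X_(var_of c j) ^+ (qF F ^ t)%N.

Definition delta (F : finFieldType) (c a b : nat) (f : {mpoly F[c]})
  : {fraction {mpoly F[c.+1]}} :=
  FracField.tofrac (\det (Nmx a b f)) / FracField.tofrac (\det (Lmx F c a)).

Definition is_poly (F : finFieldType) (n : nat) (r : {fraction {mpoly F[n]}}) : Prop :=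
  exists g : {mpoly F[n]}, r = FracField.tofrac g.

(* [delta a b f] is a polynomial iff the Moore determinant [L_a = det (x_j ^ q ^ t)] divides
   [det N_a].  Since [x |-> x ^ q ^ t] is F_q-linear, specialising x_k to an F_q-combination
   [sum_(j < k) e_j x_j] turns column k of [N_m] into the same combination of the earlier
   columns, except in the last row [h_j = x_j ^ q ^ b * f(\hat x_j)], where
   [h_k - sum_(j < k) e_j h_j] is left over.  So the specialised [det N_m] is a nonzero Moore
   minor times that entry, which does not depend on m, while the specialised [L_m] is 0.
   Conversely [L_m] is, up to a nonzero constant, the product of all the linear forms
   [x_k - sum_(j < k) e_j x_j] (k < m), hence divides every polynomial killed by these
   specialisations.  If [L_a] divides [det N_a], the entries above vanish for k < a, so
   [det N_a'] is killed by the specialisations with k < a' and [L_a'] divides it. *)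

From HB Require Import structures.
From mathcomp Require Import all_boot all_order all_algebra all_fingroup all_field.
From mathcomp Require Import mpoly zify.
Set Implicit Arguments. Unset Strict Implicit. Unset Printing Implicit Defensive.
Import GRing.Theory.
Local Open Scope ring_scope.

Section CardFrobenius.
Variables (F : finFieldType) (A : comAlgType F).

Lemma pchar_nat_cardX t : [pchar A].-nat (#|F| ^ t)%N.
Proof.
have [p _ pF] := finPcharP F.
have pA : p \in [pchar A] by rewrite (pchar_lalg A).
rewrite (eq_pnat _ (pcharf_eq pA)) (card_pprimeChar pF) -expnM pnatX pnat_id //.
exact: pcharf_prime pF.
Qed.

Lemma expr_cardX_sumZ (I : Type) (r : seq I) (P : pred I) (e : I -> F) (x : I -> A) t :
  (\sum_(i <- r | P i) e i *: x i) ^+ (#|F| ^ t)%N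
  = \sum_(i <- r | P i) e i *: x i ^+ (#|F| ^ t)%N.
Proof.
elim/big_ind2: _ => [|u y v z <- <-|i _].
- by rewrite expr0n expn_eq0 eqn0Ngt (ltnW (finNzRing_gt1 F)).
- exact/exprDn_pchar/pchar_nat_cardX.
- rewrite exprZn; congr (_ *: _); elim: t => [|t IHt]; first exact: expr1.
  by rewrite expnSr exprM IHt expf_card.
Qed.

End CardFrobenius.

Section MooreMatrix.
Variables (R : comNzRingType) (n q : nat).
Hypothesis q_gt1 : (1 < q)%N.

Definition moore_mx m (w : 'I_m -> 'I_n) : 'M[{mpoly R[n]}]_m :=
  \matrix_(t < m, j < m) 'X_(w j) ^+ (q ^ t).

Definition moore_mnm m (w : 'I_m -> 'I_n) : 'X_{1..n} :=
  (\sum_(i < m) U_(w i) *+ (q ^ i))%MM.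

Lemma prod_moore_mx_perm m (w : 'I_m -> 'I_n) (s : 'S_m) :
  \prod_(i < m) moore_mx w i (s i) = 'X_[moore_mnm (w \o s)].
Proof. by rewrite /moore_mnm -mprodXnE; apply: eq_bigr => i _; rewrite mxE. Qed.

Lemma moore_mnmE m (w : 'I_m -> 'I_n) i : injective w -> moore_mnm w (w i) = (q ^ i)%N.
Proof.
move=> inj_w; rewrite /moore_mnm mnm_sumE (bigD1 i) //= mulmnE mnm1E eqxx mul1n.
by rewrite big1 ?addn0 // => j ne_ji; rewrite mulmnE mnm1E (inj_eq inj_w) (negPf ne_ji).
Qed.

(* Distinct permutations give distinct monomials, by uniqueness of base-q expansions. *)
Lemma det_moore_mx_neq0 m (w : 'I_m -> 'I_n) : injective w -> \det (moore_mx w) != 0.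
Proof.
move=> inj_w; apply/eqP => /(congr1 (mcoeff (moore_mnm w))).
rewrite mcoeff0 /determinant raddf_sum (bigD1 1%g) //= [X in _ + X]big1 => [|s ne_s1].
  rewrite addr0 prod_moore_mx_perm odd_perm1 mul1r mcoeffX.
  have -> : moore_mnm (w \o (1%g : 'S_m)) = moore_mnm w.
    by apply: eq_bigr => i _; rewrite /= perm1.
  by rewrite eqxx => /eqP; rewrite oner_eq0.
have ne_mnm : moore_mnm (w \o s) != moore_mnm w.
  apply: contra ne_s1 => /eqP eq_mnm; apply/eqP/permP => i; rewrite perm1.
  have inj_ws : injective (w \o s) by apply: inj_comp => //; exact: perm_inj.
  apply/val_inj/(expnI q_gt1).
  by rewrite -(moore_mnmE (s i) inj_w) -(moore_mnmE i inj_ws) eq_mnm.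
rewrite prod_moore_mx_perm mulr_sign.
by case: (odd_perm s); rewrite ?mcoeffN mcoeffX (negPf ne_mnm) ?oppr0.
Qed.

Lemma msize_det_moore_mx m (w : 'I_m -> 'I_n) :
  (msize (\det (moore_mx w)) <= (\sum_(t < m) q ^ t).+1)%N.
Proof.
rewrite /determinant; apply: leq_trans (msize_sum _ _ _) _.
apply/bigmax_leqP => s _; rewrite prod_moore_mx_perm mulr_sign fun_if msizeN if_same.
rewrite msizeX ltnS /moore_mnm mdeg_sum; apply/eq_leq/eq_bigr => i _.
by rewrite mdegMn mdeg1 mul1n.
Qed.

End MooreMatrix.
Arguments moore_mx {R n} q {m} w.
Arguments det_moore_mx_neq0 {R n q}.
Arguments msize_det_moore_mx {R n} q {m} w.

Lemma msize_prod (R : idomainType) n (I : Type) (r : seq I) (p : I -> {mpoly R[n]}) :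
  (forall i, p i != 0) ->
  msize (\prod_(i <- r) p i) = (\sum_(i <- r) (msize (p i)).-1).+1.
Proof.
move=> p_neq0; elim: r => [|i r IHr]; first by rewrite !big_nil msize1.
rewrite !big_cons msizeM ?IHr // -?msize_poly_eq0 ?IHr //.
by move: (p_neq0 i); rewrite -msize_poly_eq0; lia.
Qed.

Section VarSubst.
Variables (R : comNzRingType) (n : nat).

Definition var_subst (i : 'I_n) (v : {mpoly R[n]}) : n.-tuple {mpoly R[n]} :=
  [tuple if j == i then v else 'X_j | j < n].

Lemma var_substX i v j : 'X_j \mPo var_subst i v = if j == i then v else 'X_j.
Proof. by rewrite comp_mpolyXU -tnth_nth tnth_map tnth_ord_tuple. Qed.

Lemma subr_var_subst_dvd i v (p : {mpoly R[n]}) :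
  exists w, p - (p \mPo var_subst i v) = ('X_i - v) * w.
Proof.
pose P p := exists w, p - (p \mPo var_subst i v) = ('X_i - v) * w.
have P_add p1 p2 : P p1 -> P p2 -> P (p1 + p2).
  move=> [w1 E1] [w2 E2]; exists (w1 + w2).
  by rewrite raddfD mulrDr -E1 -E2 opprD addrACA.
have P_mul p1 p2 : P p1 -> P p2 -> P (p1 * p2).
  move=> [w1 E1] [w2 E2]; exists (p1 * w2 + (p2 \mPo var_subst i v) * w1).
  rewrite rmorphM /= mulrDr mulrCA -E2 mulrCA -E1 !mulrBr addrA [_ * p1]mulrC subrK.
  by rewrite [_ * (p1 \mPo _)]mulrC.
have P_mnm m : P 'X_[m].
  have P1 : P 1 by exists 0; rewrite rmorph1 subrr mulr0.
  rewrite mpolyXE_id; apply: big_ind => // j _.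
  elim: (m j) => [|k IHk]; first by rewrite expr0.
  rewrite exprS; apply: P_mul IHk; rewrite /P var_substX.
  by case: eqP => [->|_]; [exists 1; rewrite mulr1 | exists 0; rewrite subrr mulr0].
elim/mpolyind: p => [|a m p _ _ Pp]; first by exists 0; rewrite raddf0 subrr mulr0.
apply: P_add Pp; have [w E] := P_mnm m.
by exists (a *: w); rewrite comp_mpolyZ -scalerBr E scalerAr.
Qed.

End VarSubst.

Lemma det_col_lincomb (R : comRingType) m (A : 'M[R]_m.+1) (k : 'I_m.+1)
    (e : 'I_m.+1 -> R) (d : R) :
  (forall i, A i k = \sum_(j < m.+1 | (j < k)%N) e j * A i j + (i == ord_max)%:R * d) ->
  \det A = d * cofactor A ord_max k.
Proof.
move=> col_k.
pose A' := \matrix_(i, j) if j == k then (i == ord_max)%:R * d else A i j.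
pose E := \matrix_(i, j) (((j == k) && (i < k)%N)%:R * e i).
have A_fact : A = A' *m (1%:M + E).
  apply/matrixP => i j; rewrite mulmxDr mulmx1 !mxE.
  have [-> | /negPf ne_jk] := eqVneq j k; last first.
    by rewrite big1 ?addr0 // => l _; rewrite !mxE ne_jk mul0r mulr0.
  rewrite col_k addrC; congr (_ + _); rewrite big_mkcond; apply: eq_bigr => l _.
  rewrite !mxE eqxx /=; case: ltnP => [lt_lk | _]; last by rewrite mul0r mulr0.
  by have -> : (l == k) = false := ltn_eqF lt_lk; rewrite mul1r mulrC.
have trig_E : is_trig_mx (1%:M + E)^T.
  apply/is_trig_mxP => i j lt_ij; rewrite !mxE.
  have -> : (j == i) = false := gtn_eqF lt_ij.
  by case: eqP => [<- | _]; rewrite ?ltnNge ?(ltnW lt_ij) mul0r addr0.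
have det_E : \det (1%:M + E) = 1.
  rewrite -det_tr det_trig //; apply: big1 => i _; rewrite !mxE eqxx.
  by case: eqP => [<- | _]; rewrite ?ltnn mul0r addr0.
have cofactorE : cofactor A' ord_max k = cofactor A ord_max k.
  rewrite /cofactor; congr (_ * \det _); apply/matrixP => i j.
  by rewrite !mxE eq_sym (negPf (neq_lift k j)).
rewrite {1}A_fact det_mulmx det_E mulr1 (expand_det_col _ k) (bigD1 ord_max) //=.
rewrite big1 => [|i ne_i]; last by rewrite mxE eqxx (negPf ne_i) !mul0r.
by rewrite !mxE !eqxx mul1r addr0 cofactorE.
Qed.

Section FirstVariables.
Variables (F : finFieldType) (c : nat).
Local Notation n := c.+1.
Local Notation R := {mpoly F[n]}.
Local Notation q := (qF F).
Local Notation subst k v := (comp_mpoly (var_subst (inord k : 'I_n) v)).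

(* Variables are indexed by nat: [inord] makes [xvar j] junk for [j >= n], hence the bounds. *)
Definition xvar (j : nat) : R := 'X_(inord j).

Definition lincomb k (e : nat -> F) : R := \sum_(j < k) e j *: xvar j.

Definition moore_factor k (e : nat -> F) : R := xvar k - lincomb k e.

Definition moore_prod m : R :=
  \prod_(k < m) \prod_(e : k.-tuple F) moore_factor k (nth 0 e).

Definition vanishes_on_lindep m (p : R) :=
  forall k, (k < m)%N -> forall e : nat -> F, subst k (lincomb k e) p = 0.

Lemma eq_inord j k : (j < n)%N -> (k < n)%N -> (inord j == inord k :> 'I_n) = (j == k).
Proof. by move=> lt_jn lt_kn; rewrite -val_eqE /= !inordK. Qed.

Lemma mcoeff_xvar j i : (j < n)%N -> (i < n)%N -> (xvar j)@_U_(inord i) = (j == i)%:R.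
Proof. by move=> lt_jn lt_in; rewrite mcoeffXU eq_inord. Qed.

Lemma xvar_subst k v j : (j < n)%N -> (k < n)%N ->
  subst k v (xvar j) = if j == k then v else xvar j.
Proof. by move=> lt_jn lt_kn; rewrite var_substX eq_inord. Qed.

Lemma lincomb_subst k v k' e : (k' <= k)%N -> (k < n)%N ->
  subst k v (lincomb k' e) = lincomb k' e.
Proof.
move=> le_k'k lt_kn; rewrite raddf_sum; apply: eq_bigr => j _ /=.
have lt_jk : (j < k)%N := leq_trans (ltn_ord j) le_k'k.
by rewrite comp_mpolyZ xvar_subst ?(ltn_eqF lt_jk) // (ltn_trans lt_jk).
Qed.

Lemma moore_factor_subst k v k' e : (k' < k)%N -> (k < n)%N ->
  subst k v (moore_factor k' e) = moore_factor k' e.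
Proof.
move=> lt_k'k lt_kn; rewrite raddfB /= lincomb_subst ?(ltnW lt_k'k) //.
by rewrite xvar_subst ?(ltn_eqF lt_k'k) // (ltn_trans lt_k'k).
Qed.

Lemma moore_prod_subst k v m : (m <= k)%N -> (k < n)%N ->
  subst k v (moore_prod m) = moore_prod m.
Proof.
move=> le_mk lt_kn; rewrite rmorph_prod; apply: eq_bigr => k' _.
rewrite rmorph_prod; apply: eq_bigr => e _ /=.
by rewrite moore_factor_subst // (leq_trans (ltn_ord k') le_mk).
Qed.

Lemma mcoeff_lincomb k e i : (k <= n)%N -> (i < n)%N ->
  (lincomb k e)@_U_(inord i) = if (i < k)%N then e i else 0.
Proof.
move=> le_kn lt_in; rewrite raddf_sum /=.
under eq_bigr => j _ do rewrite mcoeffZ (mcoeff_xvar (leq_trans (ltn_ord j) le_kn) lt_in).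
case: ltnP => [lt_ik | le_ki].
  rewrite (bigD1 (Ordinal lt_ik)) //= eqxx mulr1 big1 ?addr0 // => j ne_ji.
  by rewrite -val_eqE /= in ne_ji; rewrite (negPf ne_ji) mulr0.
by rewrite big1 // => j _; rewrite ltn_eqF ?mulr0 // (leq_trans (ltn_ord j) le_ki).
Qed.

Lemma lincomb_tuple_inj k (e e' : k.-tuple F) : (k <= n)%N ->
  lincomb k (nth 0 e) = lincomb k (nth 0 e') -> e = e'.
Proof.
move=> le_kn eq_ee'; apply: eq_from_tnth => j; have lt_jn := leq_trans (ltn_ord j) le_kn.
move/(congr1 (mcoeff U_(inord j))): eq_ee'.
by rewrite !mcoeff_lincomb // ltn_ord !(tnth_nth 0).
Qed.

Lemma mcoeff_moore_factor k e : (k < n)%N -> (moore_factor k e)@_U_(inord k) = 1.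
Proof.
by move=> lt_kn; rewrite mcoeffB mcoeff_lincomb ?ltnn ?subr0 ?mcoeff_xvar ?eqxx // ltnW.
Qed.

Lemma moore_factor_neq0 k e : (k < n)%N -> moore_factor k e != 0.
Proof.
move=> lt_kn; apply: contra_neq (oner_neq0 F) => eq0.
by rewrite -(mcoeff_moore_factor e lt_kn) eq0 mcoeff0.
Qed.

Lemma moore_prod_neq0 m : (m <= n)%N -> moore_prod m != 0.
Proof.
move=> le_mn; apply/prodf_neq0 => k _; apply/prodf_neq0 => e _.
exact: moore_factor_neq0 (leq_trans (ltn_ord k) le_mn).
Qed.

Lemma msize_moore_factor k e : (k < n)%N -> msize (moore_factor k e) = 2.
Proof.
move=> lt_kn; apply/anti_leq/andP; split.
  apply: leq_trans (msizeD_le _ _) _; rewrite msizeN geq_max msizeX mdeg1 /=.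
  apply: leq_trans (msize_sum _ _ _) _; apply/bigmax_leqP => j _.
  by apply: leq_trans (msizeZ_le _ _) _; rewrite msizeX mdeg1.
have := @msize_mdeg_lt _ _ (moore_factor k e) U_(inord k).
by rewrite mcoeff_msupp mcoeff_moore_factor // oner_neq0 mdeg1; apply.
Qed.

Lemma msize_moore_prod m : (m <= n)%N -> msize (moore_prod m) = (\sum_(k < m) q ^ k).+1.
Proof.
move=> le_mn; rewrite msize_prod => [|k]; last first.
  by apply/prodf_neq0 => e _; exact: moore_factor_neq0 (leq_trans (ltn_ord k) le_mn).
congr _.+1; apply: eq_bigr => k _; have lt_kn := leq_trans (ltn_ord k) le_mn.
rewrite msize_prod => [|e]; last exact: moore_factor_neq0.
under eq_bigr => e _ do rewrite msize_moore_factor //.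
by rewrite /= sum1_card card_tuple.
Qed.

Lemma moore_factors_dvd m (s : seq (m.-tuple F)) (w : R) : (m < n)%N -> uniq s ->
  (forall e, e \in s -> subst m (lincomb m (nth 0 e)) w = 0) ->
  exists u, w = \prod_(e <- s) moore_factor m (nth 0 e) * u.
Proof.
move=> lt_mn; elim: s w => [|e s IHs] w /=; first by exists w; rewrite big_nil mul1r.
move=> /andP[e_notin_s uniq_s] w_van.
have [w' Ew] := subr_var_subst_dvd (inord m) (lincomb m (nth 0 e)) w.
rewrite w_van ?mem_head // subr0 -/(xvar m) in Ew.
have w'_van e' : e' \in s -> subst m (lincomb m (nth 0 e')) w' = 0.
  move=> s_e'; have := w_van e'; rewrite in_cons s_e' orbT => /(_ isT) /eqP.
  rewrite Ew rmorphM mulf_eq0 /= raddfB /= xvar_subst // eqxx lincomb_subst //.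
  rewrite subr_eq0 => /orP[/eqP /lincomb_tuple_inj eq_e'e | /eqP //].
  by move: e_notin_s; rewrite -eq_e'e ?s_e' // ltnW.
have [u Ew'] := IHs w' uniq_s w'_van.
by exists u; rewrite Ew Ew' big_cons mulrA.
Qed.

Lemma moore_prod_dvd m p : (m <= n)%N -> vanishes_on_lindep m p ->
  exists u, p = moore_prod m * u.
Proof.
elim: m p => [|m IHm] p le_mn p_van; first by exists p; rewrite /moore_prod big_ord0 mul1r.
have [w Ep] := IHm p (ltnW le_mn) (fun k lt_km => p_van k (ltnW lt_km)).
have w_van (e : m.-tuple F) : e \in index_enum {: m.-tuple F} ->
    subst m (lincomb m (nth 0 e)) w = 0.
  move=> _; have /eqP := p_van m (ltnSn m) (nth 0 e).
  rewrite Ep rmorphM /= moore_prod_subst // mulf_eq0.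
  by rewrite (negPf (moore_prod_neq0 (ltnW le_mn))) => /eqP.
have [u Ew] := moore_factors_dvd le_mn (index_enum_uniq _) w_van.
by exists u; rewrite Ep Ew /moore_prod big_ord_recr mulrA.
Qed.

Definition moore_last m (h : nat -> R) : 'M[R]_m :=
  \matrix_(t < m, j < m) if (t.+1 < m)%N then xvar j ^+ (q ^ t) else h j.

(* Column k of the image of [moore_last m h] is the [e]-combination of the earlier columns,
   plus the leftover [s (h k - sum_j e j *: h j)] in the last row. *)
Lemma lrmorph_det_moore_last (s : {lrmorphism R -> R}) m h k e :
  (m <= n)%N -> (k < m)%N -> s (xvar k) = lincomb k e ->
  (forall j, (j < m)%N -> j != k -> s (xvar j) = xvar j) ->
  exists2 C : R, C != 0 & s (\det (moore_last m h)) = C * s (h k - \sum_(j < k) e j *: h j).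
Proof.
case: m => // m le_mn lt_km s_xk s_xj.
pose kk : 'I_m.+1 := inord k; have kkE : kk = k :> nat := inordK lt_km.
pose w (j : 'I_m) : 'I_n := inord (lift kk j).
have inj_w : injective w.
  move=> j j' /(congr1 val); rewrite /= !inordK ?(leq_trans (ltn_ord _) le_mn) //.
  by move/val_inj/lift_inj.
have minorE : row' ord_max (col' kk (map_mx s (moore_last m.+1 h))) = moore_mx q w.
  apply/matrixP => t j; rewrite !mxE lift_max ltnS ltn_ord /= rmorphXn /= s_xj //.
    exact: ltn_ord (lift kk j).
  by rewrite -kkE -[bump _ _]/(val (lift kk j)) val_eqE eq_sym neq_lift.
exists (cofactor (map_mx s (moore_last m.+1 h)) ord_max kk).
  by rewrite /cofactor minorE mulf_neq0 ?signr_eq0 ?det_moore_mx_neq0 ?finNzRing_gt1.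
rewrite -det_map_mx mulrC; apply: (@det_col_lincomb _ _ _ kk (fun j => (e j)%:MP)) => i.
rewrite kkE (big_ord_narrow (ltnW lt_km)).
case: (unliftP ord_max i) => [t ->|->].
  rewrite eq_sym (negPf (neq_lift _ _)) mul0r addr0 !mxE lift_max ltnS ltn_ord /=.
  rewrite rmorphXn /= kkE s_xk expr_cardX_sumZ; apply: eq_bigr => j _.
  rewrite !mxE lift_max ltnS ltn_ord /= rmorphXn /= s_xj ?mul_mpolyC ?ltn_eqF //.
  exact: ltn_trans lt_km.
rewrite eqxx mul1r !mxE ltnn raddfB raddf_sum kkE addrC.
under [X in _ + X]eq_bigr => j _ do rewrite !mxE ltnn mul_mpolyC -linearZ.
by rewrite subrK.
Qed.

Lemma subst_det_moore_last m h k e : (m <= n)%N -> (k < m)%N ->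
  exists2 C : R, C != 0 & subst k (lincomb k e) (\det (moore_last m h))
    = C * subst k (lincomb k e) (h k - \sum_(j < k) e j *: h j).
Proof.
move=> le_mn lt_km; have lt_kn := leq_trans lt_km le_mn.
apply: lrmorph_det_moore_last => //; first by rewrite /= xvar_subst // eqxx.
by move=> j lt_jm /negPf ne_jk; rewrite /= xvar_subst ?ne_jk // (leq_trans lt_jm).
Qed.

Lemma vanishes_on_lindep_mulr m p u : vanishes_on_lindep m p -> vanishes_on_lindep m (p * u).
Proof. by move=> p_van k lt_km e; rewrite rmorphM /= p_van // mul0r. Qed.

Lemma vanishes_det_moore_last_le m' m h : (m' <= m)%N -> (m <= n)%N ->
  vanishes_on_lindep m (\det (moore_last m h)) ->
  vanishes_on_lindep m' (\det (moore_last m' h)).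
Proof.
move=> le_m'm le_mn van k lt_km' e; have lt_km := leq_trans lt_km' le_m'm.
have [C _ ->] := subst_det_moore_last h e (leq_trans le_m'm le_mn) lt_km'.
have [C' C'_neq0 substE] := subst_det_moore_last h e le_mn lt_km.
move: (van k lt_km e); rewrite substE => /eqP.
by rewrite mulf_eq0 (negPf C'_neq0) => /eqP ->; rewrite mulr0.
Qed.

Lemma Lmx_moore_mx m : Lmx F c m = moore_mx q (@var_of c m).
Proof. by apply/matrixP => t j; rewrite !mxE. Qed.

Lemma Lmx_moore_last m : Lmx F c m = moore_last m (fun j => xvar j ^+ (q ^ m.-1)).
Proof.
apply/matrixP => t j; rewrite !mxE; case: ltnP => // le_mt.
by rewrite (_ : t = m.-1 :> nat) //; move: (ltn_ord t); lia.
Qed.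

Lemma det_Lmx_neq0 m : (m <= n)%N -> \det (Lmx F c m) != 0.
Proof.
move=> le_mn; rewrite Lmx_moore_mx.
apply: det_moore_mx_neq0 => [|j j' /(congr1 val)]; first exact: finNzRing_gt1.
by rewrite /= !inordK ?(leq_trans (ltn_ord _) le_mn) //; apply: val_inj.
Qed.

Lemma vanishes_det_Lmx m : (m <= n)%N -> vanishes_on_lindep m (\det (Lmx F c m)).
Proof.
move=> le_mn k lt_km e; have lt_kn := leq_trans lt_km le_mn.
rewrite Lmx_moore_last.
have [C _ ->] := subst_det_moore_last (fun j => xvar j ^+ (q ^ m.-1)) e le_mn lt_km.
rewrite -expr_cardX_sumZ rmorphB !rmorphXn /= xvar_subst // eqxx lincomb_subst //.
by rewrite subrr mulr0.
Qed.

(* [moore_prod m] divides [\det (Lmx F c m)] and has at least its size, so they are associates. *)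
Lemma det_Lmx_dvd m p : (m <= n)%N -> vanishes_on_lindep m p ->
  exists u, p = \det (Lmx F c m) * u.
Proof.
move=> le_mn p_van; have [w ->] := moore_prod_dvd le_mn p_van.
have [u0 detL] := moore_prod_dvd le_mn (vanishes_det_Lmx le_mn).
have u0_neq0 : u0 != 0.
  by apply: contraNneq (det_Lmx_neq0 le_mn) => u0_0; rewrite detL u0_0 mulr0.
have /msize1_polyC u0_const : (msize u0 <= 1)%N.
  have := msize_det_moore_mx (R := F) q (@var_of c m); rewrite -Lmx_moore_mx detL.
  rewrite msizeM ?moore_prod_neq0 // msize_moore_prod //.
  (* the two occurrences of [msize u0] carry different ring instances *)
  by set d := msize u0; lia.
have u00_neq0 : u0@_0 != 0 by apply: contraNneq u0_neq0 => u00_0; rewrite u0_const u00_0.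
exists ((u0@_0)^-1%:MP * w); rewrite detL -mulrA; congr (_ * _).
by rewrite {1}u0_const mulrA -mpolyCM divff ?mul1r.
Qed.

Lemma Nmx_moore_last a b f :
  Nmx a b f = moore_last a (fun j => xvar j ^+ (q ^ b) * fhat (inord j) f).
Proof. by apply/matrixP => t j; rewrite !mxE. Qed.

Lemma is_poly_deltaP a b f : (a <= n)%N ->
  is_poly (delta a b f) <-> exists u, \det (Nmx a b f) = \det (Lmx F c a) * u.
Proof.
move=> le_an; have L_neq0 : tofrac (\det (Lmx F c a)) != 0 by rewrite tofrac_eq0 det_Lmx_neq0.
split=> [[g deltaE] | [u detN]].
  by exists g; apply/eqP; rewrite -tofrac_eq tofracM -deltaE mulrC mulfVK.
by exists u; rewrite /delta detN tofracM mulrAC divff ?mul1r.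
Qed.

End FirstVariables.

Theorem mainTheorem10 (F : finFieldType) (b c a : nat) (f : {mpoly F[c]}) :
  (1 <= a <= c.+1)%N ->
  is_poly (delta a b f) ->
  forall a' : nat, (1 <= a')%N -> (a' < a)%N -> is_poly (delta a' b f).
Proof.
move=> /andP[_ le_an] delta_poly a' _ lt_a'a.
have [g detN] := (is_poly_deltaP b f le_an).1 delta_poly.
have le_a'n := leq_trans (ltnW lt_a'a) le_an.
apply/(is_poly_deltaP b f le_a'n)/det_Lmx_dvd => //.
rewrite Nmx_moore_last; apply: (vanishes_det_moore_last_le (ltnW lt_a'a) le_an).
by rewrite -Nmx_moore_last detN; apply/vanishes_on_lindep_mulr/vanishes_det_Lmx.
Qed.
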